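(* Assume (A1) and (A2), and let $\alpha>0$ be arbitrary. Along every trajectory of the algorithm described in the context, for all $k\ge0$, $$V_\psi(k+1)-V_\psi(k)\le-\tfrac12\|\bm e_\psi(k)\|^2+\beta_{\psi\xi}\|\bm e_\xi(k)\|^2+\beta_{\psi x}\|\bm e_x(k)\|^2.$$
   Context: Game. $N$ coalitions; coalition $i$ has agents $i1,\dots,in_i$; $\mathcal V_i=\{i1,\dots,in_i\}$, $\mathcal V=\bigcup_i\mathcal V_i$, $n_{\mathrm{sum}}=\sum_in_i$; agents ordered lexicographically. Agent $ij$ has state $x_{ij}\in\mathbb{R}$; $\bm x_i=(x_{i1},\dots,x_{in_i})^T$, $\bm x=(\bm x_1^T,\dots,\bm x_N^T)^T$. Costs $f_{ij}:\mathbb{R}^{n_{\mathrm{sum}}}\to\mathbb{R}$, $f_i=\sum_jf_{ij}$. For $\bm y\in\mathbb{R}^N$, $g_i(\bm y)=f_i((y_1\mathbf 1_{n_1}^T,\dots,y_N\mathbf 1_{n_N}^T)^T)$, $\mathcal Q(\bm y)=(\partial g_i/\partial y_i(\bm y))_{i=1}^N$; $\bm y^*$ denotes the Nash equilibrium of the game $\min_{y_i}g_i(\bm y)$ (i.e. $\mathcal Q(\bm y^* )=0$ under convexity). Graph. Directed graph $\mathcal G=(\mathcal V,\mathcal E)$, $(pq,ij)\in\mathcal E$ meaning $ij$ receives from $pq$. $a_{ij}^{pq}=1$ if $(pq,ij)\in\mathcal E$, $pq\ne ij$, else $0$; $d_{ij}=\sum_{pq}a_{ij}^{pq}$; Laplacian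 $L$ with diagonal $d_{ij}$, off-diagonal $-a_{ij}^{pq}$. $\mathcal G_i$: subgraph induced on $\mathcal V_i$. $\mathcal N_{ij}^{\mathrm{in}}$, $\mathcal N_{ij}^{i\text{-in}}$, $\mathcal N_{ij}^{i\text{-out}}$: in-neighbors in $\mathcal G$, in-neighbors and out-neighbors in $\mathcal G_i$. Assumptions. (A1) $\mathcal G$ and every $\mathcal G_i$ are strongly connected. (A2) each $f_{ij}$ is convex, $C^2$, with $\nabla f_{ij}$ Lipschitz of constant $l_{ij}$. (A3) $\exists l>0$: $(\bm a-\bm b)^T(\mathcal Q(\bm a)-\mathcal Q(\bm b))\ge l\|\bm a-\bm b\|^2$ for all $\bm a,\bm b$. Algorithm. Weights $r_{ij}^{im}>0$ for $im\in\mathcal N_{ij}^{i\text{-in}}\cup\{ij\}$ summing to 1, $c_{im}^{ij}>0$ for $im\in\mathcal N_{ij}^{i\text{-out}}\cup\{ij\}$ summing to 1, other within-coalition weights $0$; $R_i=[r_{ij}^{im}]$, $C_i=[c_{ij}^{im}]$ ($j$ row, $m$ column). Step size $\alpha>0$. Initialization: $x_{ij}(0),\bm\xi_{ij}(0)\in\mathbb{R}^{n_{\mathrm{sum}}}$ arbitrary, $\psi_{ij}^{il}(0)=\frac{\partial f_{ij}}{\partial x_{il}}(\bm\xi_{ij}(0))$. For $k\ge0$: $x_{ij}(k+1)=\sum_mr_{ij}^{im}x_{im}(k)-\frac{\alpha}{n_i}\sum_{m=1}^{n_i}\psi_{ij}^{im}(k)$; $\xi_{ij}^{pq}(k+1)=\xi_{ij}^{pq}(k)-\frac1{d_{ij}+a_{ij}^{pq}}\big(\sum_{lm\in\mathcal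 N_{ij}^{\mathrm{in}}}(\xi_{ij}^{pq}(k)-\xi_{lm}^{pq}(k))+a_{ij}^{pq}(\xi_{ij}^{pq}(k)-x_{pq}(k))\big)$ for all $pq\in\mathcal V$; $\psi_{ij}^{il}(k+1)=\sum_mc_{ij}^{im}\psi_{im}^{il}(k)+\frac{\partial f_{ij}}{\partial x_{il}}(\bm\xi_{ij}(k+1))-\frac{\partial f_{ij}}{\partial x_{il}}(\bm\xi_{ij}(k))$. Auxiliary quantities. $u_i$: $u_i^TR_i=u_i^T$, $u_i^T\mathbf 1=n_i$; $v_i$: $C_iv_i=v_i$, $\mathbf 1^Tv_i=n_i$. $\bar C_i=C_i-\frac{v_i\mathbf 1^T}{n_i}$, $\bar I_{v_i}=I-\frac{v_i\mathbf 1^T}{n_i}$, $\bar R_i=R_i-\frac{\mathbf 1u_i^T}{n_i}$, $\bar I_{u_i}=I-\frac{\mathbf 1u_i^T}{n_i}$. $\Gamma$, $A_d$: diagonal $n_{\mathrm{sum}}^2\times n_{\mathrm{sum}}^2$ matrices with entries $\frac1{d_{ij}+a_{ij}^{pq}}$, $a_{ij}^{pq}$ indexed by $(ij,pq)$, $ij$ outer, $pq$ inner. $H=\Gamma(L\otimes I_{n_{\mathrm{sum}}}+A_d)$, $\mathcal M=I-H$. $W_{c_i},W_{R_i},W_{\mathcal M}$: symmetric positive definite solutions of $\bar C_i^TW\bar C_i-W=-I$, $\bar R_i^TW\bar R_i-W=-I$, $\mathcal M^TW\mathcal M-W=-I$. Spectral matrix norms. $\beta_{\psi\xi}=2\max_{i,j}\{(2\|\bar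 C_i^TW_{c_i}\bar I_{v_i}\|^2+\|\bar I_{v_i}^TW_{c_i}\bar I_{v_i}\|)l_{ij}^2\}\|H\|^2$, $\beta_{\psi x}=n_{\mathrm{sum}}\beta_{\psi\xi}$. Errors and Lyapunov functions. $\bm\psi_i=(\psi_{i1}^{i1},\dots,\psi_{i1}^{in_i},\psi_{i2}^{i1},\dots,\psi_{in_i}^{in_i})^T\in\mathbb{R}^{n_i^2}$, $\bar{\bm\psi}_i=\frac1{n_i}(\mathbf 1_{n_i}^T\otimes I_{n_i})\bm\psi_i$, $\bm e_{\psi_i}=\bm\psi_i-v_i\otimes\bar{\bm\psi}_i$. $\bar x_i=u_i^T\bm x_i/n_i$, $e_{\bar x_i}=\bar x_i-y_i^*$, $\bm e_{x_i}=\bm x_i-\mathbf 1_{n_i}\bar x_i$, $\bar{\bm X}=(\bar x_1\mathbf 1_{n_1}^T,\dots,\bar x_N\mathbf 1_{n_N}^T)^T$. $\bm\xi_i=(\bm\xi_{i1}^T,\dots,\bm\xi_{in_i}^T)^T$, $\bm e_{\xi_i}=\bm\xi_i-\mathbf 1_{n_i}\otimes\bar{\bm X}$. $\bm e_\psi,\bm e_{\bar x},\bm e_x,\bm e_\xi$: stacks over $i=1,\dots,N$. $V_\psi=\sum_i\bm e_{\psi_i}^T(W_{c_i}\otimes I_{n_i})\bm e_{\psi_i}$, $V_{\bar x}=\sum_i\frac{n_i^3}{\alpha u_i^Tv_i}e_{\bar x_i}^2$, $V_\xi=\bm e_\xi^TW_{\mathcal M}\bm e_\xi$, $V_x=\sum_i\bm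 e_{x_i}^TW_{R_i}\bm e_{x_i}$, each evaluated at time $k$. *)

From HB Require Import structures.
From mathcomp Require Import all_boot all_order all_algebra.
From mathcomp Require Import all_classical all_reals all_analysis.
From mathcomp Require Import mxtens.

Set Implicit Arguments.
Unset Strict Implicit.
Unset Printing Implicit Defensive.

Import Order.TTheory GRing.Theory Num.Theory numFieldNormedType.Exports.
Local Open Scope ring_scope.
Local Open Scope classical_set_scope.

Section LinAlg.
Variable R : realType.

Definition enorm m p (A : 'M[R]_(m, p)) : R :=
  Num.sqrt (\sum_(i < m) \sum_(j < p) A i j ^+ 2).

Definition specnorm m p (A : 'M[R]_(m, p)) : R :=
  sup [set enorm (A *m v) | v in [set v : 'cV[R]_p | enorm v = 1]].

Definition symmetric_mx m (W : 'M[R]_m) := W^T = W.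
Definition posdef_mx m (W : 'M[R]_m) :=
  forall v : 'cV[R]_m, v != 0 -> 0 < (v^T *m W *m v) 0 0.

Definition lyap_sol m (A W : 'M[R]_m) :=
  [/\ symmetric_mx W, posdef_mx W & A^T *m W *m A - W = - 1%:M].

Definition partialD p (f : 'rV[R]_p -> R) (r : 'I_p) (z : 'rV[R]_p) : R :=
  'D_(delta_mx 0 r) f z.

Definition gradient p (f : 'rV[R]_p -> R) (z : 'rV[R]_p) : 'rV[R]_p :=
  \row_r partialD f r z.

Definition convex_fun p (f : 'rV[R]_p -> R) :=
  forall (a b : 'rV[R]_p) (t : R), 0 <= t <= 1 ->
    f (t *: a + (1 - t) *: b) <= t * f a + (1 - t) * f b.

Definition C2_fun p (f : 'rV[R]_p -> R) :=
  [/\ forall z, differentiable f z,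
      forall r z, differentiable (partialD f r) z
    & forall r s, continuous (partialD (partialD f r) s)].

Definition lipschitz_gradient p (f : 'rV[R]_p -> R) (l : R) :=
  forall a b : 'rV[R]_p, enorm (gradient f a - gradient f b) <= l * enorm (a - b).

End LinAlg.

Definition strongly_connected (T : finType) (e : rel T) :=
  forall u v : T, connect e u v.

Section Game.
Variable R : realType.
Variable N : nat.
Variable n : 'I_N -> nat.

(* agent ij = (i, j), coalition i, j < n_i.  The enumeration of this
   sigma finType is lexicographic, so enum_rank is the lexicographic index. *)
Definition agent := {i : 'I_N & 'I_(n i)}.
HB.instance Definition _ := Finite.on agent.
Definition ag (i : 'I_N) (j : 'I_(n i)) : agent := existT _ i j.
Definition nsum := #|{: agent}|.
Definition aidx (a : agent) : 'I_nsum := enum_rank a.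
Definition agv (r : 'I_nsum) : agent := enum_val r.

(* Graph: E pq ij  means  (pq, ij) is an edge, i.e. ij receives from pq. *)
Variable E : rel agent.

Definition coal_rel (i : 'I_N) : rel 'I_(n i) := fun j m => E (ag j) (ag m).

Definition adj (a b : agent) : R := ((E b a) && (b != a))%:R.
Definition deg (a : agent) : R := \sum_b adj a b.
Definition lapl : 'M[R]_nsum :=
  \matrix_(r, c) (if r == c then deg (agv r) else - adj (agv r) (agv c)).

(* Gamma and A_d: diagonal, indexed by (ij, pq), ij outer *)
Definition Gam : 'M[R]_(nsum * nsum) :=
  diag_mx (\row_k (deg (agv (mxtens_unindex k).1)
                   + adj (agv (mxtens_unindex k).1) (agv (mxtens_unindex k).2))^-1).
Definition Adg : 'M[R]_(nsum * nsum) :=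
  diag_mx (\row_k adj (agv (mxtens_unindex k).1) (agv (mxtens_unindex k).2)).
Definition Hmx : 'M[R]_(nsum * nsum) := Gam *m (tensmx lapl (1%:M : 'M[R]_nsum) + Adg).

(* weights r_ij^im : R_i = [r_ij^im] (j row, m column) *)
Definition row_weights (i : 'I_N) (Rw : 'M[R]_(n i)) :=
  [/\ forall j m : 'I_(n i), (m == j) || E (ag m) (ag j) -> 0 < Rw j m,
      forall j m : 'I_(n i), ~~ ((m == j) || E (ag m) (ag j)) -> Rw j m = 0
    & forall j, \sum_m Rw j m = 1].

(* weights c_im^ij : C_i = [c_ij^im] (j row, m column), so c_im^ij = Cw m j *)
Definition col_weights (i : 'I_N) (Cw : 'M[R]_(n i)) :=
  [/\ forall j m : 'I_(n i), (m == j) || E (ag j) (ag m) -> 0 < Cw m j,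
      forall j m : 'I_(n i), ~~ ((m == j) || E (ag j) (ag m)) -> Cw m j = 0
    & forall j, \sum_m Cw m j = 1].

Definition agvec (g : agent -> R) : 'rV[R]_nsum := \row_r g (agv r).

(* Trajectory of the algorithm.
   x k ij = x_ij(k);  xi k ij pq = xi_ij^pq(k);  psi k i j l = psi_ij^il(k). *)
Definition trajectory (f : agent -> 'rV[R]_nsum -> R)
  (Rw Cw : forall i, 'M[R]_(n i)) (alpha : R)
  (x : nat -> agent -> R) (xi : nat -> agent -> agent -> R)
  (psi : nat -> forall i : 'I_N, 'I_(n i) -> 'I_(n i) -> R) :=
  [/\ forall i j l, psi 0%N i j l = partialD (f (ag j)) (aidx (ag l)) (agvec (xi 0%N (ag j))),
      forall k i j,
        x k.+1 (ag j) = \sum_m Rw i j m * x k (ag m)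
                        - alpha / (n i)%:R * \sum_m psi k i j m,
      forall k a p,
        xi k.+1 a p = xi k a p - (deg a + adj a p)^-1 *
          (\sum_b adj a b * (xi k a p - xi k b p) + adj a p * (xi k a p - x k p))
    & forall k i j l,
        psi k.+1 i j l = \sum_m Cw i j m * psi k i m l
          + partialD (f (ag j)) (aidx (ag l)) (agvec (xi k.+1 (ag j)))
          - partialD (f (ag j)) (aidx (ag l)) (agvec (xi k (ag j)))].

Definition left_perron (i : 'I_N) (Rw : 'M[R]_(n i)) (u : 'cV[R]_(n i)) :=
  u^T *m Rw = u^T /\ \sum_j u j 0 = (n i)%:R.
Definition right_perron (i : 'I_N) (Cw : 'M[R]_(n i)) (v : 'cV[R]_(n i)) :=
  Cw *m v = v /\ \sum_j v j 0 = (n i)%:R.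

Definition ones_row m : 'M[R]_(1, m) := const_mx 1.

Definition Cbar (i : 'I_N) (Cw : 'M[R]_(n i)) (v : 'cV[R]_(n i)) : 'M[R]_(n i) :=
  Cw - (n i)%:R^-1 *: (v *m ones_row (n i)).
Definition Ibar_v (i : 'I_N) (v : 'cV[R]_(n i)) : 'M[R]_(n i) :=
  1%:M - (n i)%:R^-1 *: (v *m ones_row (n i)).

Definition beta_psixi (Cw : forall i, 'M[R]_(n i)) (v : forall i, 'cV[R]_(n i))
  (Wc : forall i, 'M[R]_(n i)) (l : agent -> R) : R :=
  2 * (\big[Num.max/0]_(a : agent)
         ((2 * specnorm ((Cbar (Cw (tag a)) (v (tag a)))^T *m Wc (tag a)
                           *m Ibar_v (v (tag a))) ^+ 2
           + specnorm ((Ibar_v (v (tag a)))^T *m Wc (tag a) *m Ibar_v (v (tag a))))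
          * l a ^+ 2))
    * specnorm Hmx ^+ 2.
Definition beta_psix Cw v Wc l : R := nsum%:R * beta_psixi Cw v Wc l.

Section Errors.
Variable u v : forall i, 'cV[R]_(n i).

Definition xcoal (x : agent -> R) (i : 'I_N) : 'cV[R]_(n i) := \col_j x (ag j).
Definition xbar (x : agent -> R) (i : 'I_N) : R :=
  ((u i)^T *m xcoal x i) 0 0 / (n i)%:R.
Definition ex_sq (x : agent -> R) : R :=
  \sum_i enorm (xcoal x i - xbar x i *: const_mx 1) ^+ 2.
(* ||e_xi||^2 : e_{xi_i} = xi_i - 1 (x) \bar X, \bar X_pq = \bar x_p *)
Definition exi_sq (x : agent -> R) (xi : agent -> agent -> R) : R :=
  \sum_(a : agent) enorm (agvec (xi a) - agvec (fun b => xbar x (tag b))) ^+ 2.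

(* psi_i stacked: (psi_i1^i1, ..., psi_i1^in_i, psi_i2^i1, ...) *)
Definition psivec (ps : forall i : 'I_N, 'I_(n i) -> 'I_(n i) -> R) (i : 'I_N)
  : 'cV[R]_(n i * n i) :=
  \col_r ps i (mxtens_unindex r).1 (mxtens_unindex r).2.
Definition psibar ps (i : 'I_N) : 'cV[R]_(n i) :=
  castmx (mul1n (n i), erefl 1%N)
    ((n i)%:R^-1 *: ((tensmx (ones_row (n i)) (1%:M : 'M[R]_(n i))) *m psivec ps i)).
Definition epsi ps (i : 'I_N) : 'cV[R]_(n i * n i) :=
  psivec ps i - (tensmx (v i) (psibar ps i) : 'cV[R]_(n i * n i)).
Definition epsi_sq ps : R := \sum_i enorm (epsi ps i) ^+ 2.
Definition Vpsi (Wc : forall i, 'M[R]_(n i)) ps : R :=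
  \sum_i ((epsi ps i)^T *m (tensmx (Wc i) (1%:M : 'M[R]_(n i))) *m epsi ps i) 0 0.
End Errors.

End Game.
Arguments coal_rel {N n} E i.

From mathcomp Require Import all_boot all_order all_algebra.
From mathcomp Require Import all_classical all_reals all_analysis.
From mathcomp Require Import mxtens.
From mathcomp Require Import ring lra.
Import Order.TTheory GRing.Theory Num.Theory numFieldNormedType.Exports.
Local Open Scope ring_scope.

(* For coalition i put Psi_i := [psi_ij^il] (row j, column l).  The update is
   Psi_i(k+1) = C_i Psi_i(k) + D_i(k), with D_i the increments of the local
   partial derivatives; as C_i is column stochastic and C_i v_i = v_i, the
   tracking error Ibar_v Psi_i obeys Ibar_v Psi_i(k+1) = Cbar_i (Ibar_v Psi_i(k))
   + Ibar_v D_i.  Column by column, the Lyapunov equation for Cbar_i and Young's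
   inequality give V_psi(k+1) - V_psi(k) <= -1/2 |e_psi|^2 + sum_i c_i |D_i|^2.
   Lipschitz gradients bound row j of D_i by l_ij |xi_ij(k+1) - xi_ij(k)|.
   Finally xi(k+1) - xi(k) = -H (xi(k) - 1 (x) x(k)), since the Laplacian kills
   the common offset, and xi - 1 (x) x = e_xi - 1 (x) e_x yields
   |xi(k+1) - xi(k)|^2 <= 2 |H|^2 (|e_xi|^2 + n_sum |e_x|^2). *)

Set Implicit Arguments.
Unset Strict Implicit.
Unset Printing Implicit Defensive.

Section EuclideanNorm.
Variable R : realType.

Lemma enorm_ge0 m p (A : 'M[R]_(m, p)) : 0 <= enorm A.
Proof. exact: sqrtr_ge0. Qed.

Lemma sqr_enorm m p (A : 'M[R]_(m, p)) : enorm A ^+ 2 = \sum_i \sum_j A i j ^+ 2.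
Proof.
by rewrite sqr_sqrtr // sumr_ge0 // => i _; rewrite sumr_ge0 // => j _; rewrite sqr_ge0.
Qed.

Lemma sqr_enorm_col m (v : 'cV[R]_m) : enorm v ^+ 2 = \sum_i v i 0 ^+ 2.
Proof. by rewrite sqr_enorm; apply: eq_bigr => i _; rewrite big_ord1. Qed.

Lemma sqr_enorm_cols m p (A : 'M[R]_(m, p)) : enorm A ^+ 2 = \sum_l enorm (col l A) ^+ 2.
Proof.
rewrite sqr_enorm exchange_big; apply: eq_bigr => l _.
by rewrite sqr_enorm_col; apply: eq_bigr => i _; rewrite mxE.
Qed.

Lemma enormZ m p (c : R) (A : 'M[R]_(m, p)) : enorm (c *: A) = `|c| * enorm A.
Proof.
rewrite /enorm -sqrtr_sqr -sqrtrM ?sqr_ge0 // mulr_sumr; congr Num.sqrt.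
by apply: eq_bigr => i _; rewrite mulr_sumr; apply: eq_bigr => j _; rewrite mxE exprMn.
Qed.

Lemma ler_sqr_nneg (x y : R) : 0 <= y -> x ^+ 2 <= y ^+ 2 -> x <= y.
Proof.
move=> y0 le_sqr; apply: le_trans (ler_norm x) _.
by rewrite -sqrtr_sqr -(ger0_norm y0) -sqrtr_sqr ler_sqrt ?sqr_ge0.
Qed.

Lemma sum_mul_sqr_le (I : finType) (a b : I -> R) :
  (\sum_i a i * b i) ^+ 2 <= (\sum_i a i ^+ 2) * (\sum_i b i ^+ 2).
Proof.
have lagrange : \sum_i \sum_j (a i * b j - a j * b i) ^+ 2 =
    2 * ((\sum_i a i ^+ 2) * (\sum_i b i ^+ 2)) - 2 * (\sum_i a i * b i) ^+ 2.
  transitivity (\sum_i \sum_j (a i ^+ 2 * b j ^+ 2) + \sum_i \sum_j (a j ^+ 2 * b i ^+ 2)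
                - 2 * \sum_i \sum_j (a i * b i * (a j * b j))).
    rewrite mulr_sumr -big_split -sumrB; apply: eq_bigr => i _.
    by rewrite mulr_sumr -big_split -sumrB; apply: eq_bigr => j _ /=; ring.
  by rewrite [X in _ + X - _]exchange_big expr2 !big_distrlr /=; ring.
have : 0 <= \sum_i \sum_j (a i * b j - a j * b i) ^+ 2.
  by rewrite sumr_ge0 // => i _; rewrite sumr_ge0 // => j _; rewrite sqr_ge0.
by rewrite lagrange; lra.
Qed.

Lemma trmx_mul_colE m (a b : 'cV[R]_m) : (a^T *m b) 0 0 = \sum_i a i 0 * b i 0.
Proof. by rewrite mxE; apply: eq_bigr => i _; rewrite mxE. Qed.

Lemma trmx_mul_col_le m (a b : 'cV[R]_m) : (a^T *m b) 0 0 <= enorm a * enorm b.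
Proof.
apply: ler_sqr_nneg; first by rewrite mulr_ge0 ?enorm_ge0.
by rewrite trmx_mul_colE exprMn !sqr_enorm_col sum_mul_sqr_le.
Qed.

Lemma enorm_mulmx_le m p (A : 'M[R]_(m, p)) (v : 'cV[R]_p) :
  enorm (A *m v) <= enorm A * enorm v.
Proof.
apply: ler_sqr_nneg; first by rewrite mulr_ge0 ?enorm_ge0.
rewrite exprMn sqr_enorm_col sqr_enorm sqr_enorm_col mulr_suml.
by apply: ler_sum => i _; rewrite mxE sum_mul_sqr_le.
Qed.

Lemma specnorm_has_ubound m p (A : 'M[R]_(m, p)) :
  has_ubound [set enorm (A *m v) | v in [set v : 'cV[R]_p | enorm v = 1]]%classic.
Proof.
exists (enorm A) => _ [v /= v1 <-].
by have := enorm_mulmx_le A v; rewrite v1 mulr1.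
Qed.

Lemma specnorm_ge0 m p (A : 'M[R]_(m, p)) : 0 <= specnorm A.
Proof.
rewrite /specnorm; set S := (X in sup X).
have [->|/set0P[y Sy]] := eqVneq S set0%classic; first by rewrite sup0.
apply: le_trans (ub_le_sup (specnorm_has_ubound A) Sy).
by case: Sy => v _ <-; rewrite enorm_ge0.
Qed.

Lemma enorm_mulmx_specnorm m p (A : 'M[R]_(m, p)) (v : 'cV[R]_p) :
  enorm (A *m v) <= specnorm A * enorm v.
Proof.
have [v0|v_neq0] := eqVneq (enorm v) 0.
  by have := enorm_mulmx_le A v; rewrite v0 !mulr0.
have v_gt0 : 0 < enorm v by rewrite lt_def v_neq0 enorm_ge0.
have unit_v : enorm ((enorm v)^-1 *: v) = 1.
  by rewrite enormZ ger0_norm ?invr_ge0 ?enorm_ge0 // mulVf.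
have := ub_le_sup (specnorm_has_ubound A) (ex_intro2 _ _ _ unit_v erefl).
rewrite -scalemxAr enormZ ger0_norm ?invr_ge0 ?enorm_ge0 //.
by rewrite -/(specnorm A) mulrC ler_pdivrMr // mulrC.
Qed.

Lemma sqr_enorm_mulmx_specnorm m p (A : 'M[R]_(m, p)) (v : 'cV[R]_p) :
  enorm (A *m v) ^+ 2 <= specnorm A ^+ 2 * enorm v ^+ 2.
Proof.
rewrite -exprMn ler_pXn2r ?nnegrE ?mulr_ge0 ?enorm_ge0 ?specnorm_ge0 //.
exact: enorm_mulmx_specnorm.
Qed.

End EuclideanNorm.

Section LyapunovStep.
Variable R : realType.

Definition quadform m (W : 'M[R]_m) (e : 'cV[R]_m) : R := (e^T *m W *m e) 0 0.

Definition lyap_gain m (C B W : 'M[R]_m) : R :=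
  2 * specnorm (C^T *m W *m B) ^+ 2 + specnorm (B^T *m W *m B).

Lemma lyap_gain_ge0 m (C B W : 'M[R]_m) : 0 <= lyap_gain C B W.
Proof. by rewrite addr_ge0 ?mulr_ge0 ?exprn_ge0 ?specnorm_ge0. Qed.

Section Step.
Variables (m : nat) (C B W : 'M[R]_m).
Hypotheses (W_sym : W^T = W) (lyapC : C^T *m W *m C - W = - 1%:M).

Lemma quadform_lyap_expand (e d : 'cV[R]_m) :
  quadform W (C *m e + B *m d) = quadform W e - (e^T *m e) 0 0
    + 2 * (e^T *m (C^T *m W *m B *m d)) 0 0 + (d^T *m (B^T *m W *m B *m d)) 0 0.
Proof.
have CWC : C^T *m W *m C = W - 1%:M by rewrite -lyapC addrC subrK.
have ee : e^T *m C^T *m W *m (C *m e) = e^T *m W *m e - e^T *m e.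
  have -> : e^T *m C^T *m W *m (C *m e) = e^T *m (C^T *m W *m C) *m e.
    by rewrite !mulmxA.
  by rewrite CWC mulmxBr mulmxBl mulmx1.
have ed : e^T *m C^T *m W *m (B *m d) = e^T *m (C^T *m W *m B *m d).
  by rewrite !mulmxA.
have de : d^T *m B^T *m W *m (C *m e) = (e^T *m (C^T *m W *m B *m d))^T.
  by rewrite !trmx_mul !trmxK W_sym !mulmxA.
have dd : d^T *m B^T *m W *m (B *m d) = d^T *m (B^T *m W *m B *m d).
  by rewrite !mulmxA.
rewrite /quadform [(_ + _)^T]linearD /= !trmx_mul !mulmxDl !mulmxDr ee ed de dd.
move: (e^T *m W *m e) (e^T *m e) (e^T *m _) (d^T *m _) => ? ? ? ?.
by rewrite !mxE; ring.
Qed.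

Lemma quadform_lyap_step (e d : 'cV[R]_m) :
  quadform W (C *m e + B *m d) - quadform W e
  <= - (1 / 2) * enorm e ^+ 2 + lyap_gain C B W * enorm d ^+ 2.
Proof.
set M := C^T *m W *m B; set Q := B^T *m W *m B.
have eTe : (e^T *m e) 0 0 = enorm e ^+ 2.
  by rewrite trmx_mul_colE sqr_enorm_col; apply: eq_bigr => i _; rewrite expr2.
have cross : 2 * (e^T *m (M *m d)) 0 0 <= (1 / 2) * enorm e ^+ 2 + 2 * enorm (M *m d) ^+ 2.
  have := trmx_mul_col_le e (M *m d); have := sqr_ge0 (enorm e - 2 * enorm (M *m d)); nra.
have Md := sqr_enorm_mulmx_specnorm M d.
have dQd : (d^T *m (Q *m d)) 0 0 <= specnorm Q * enorm d ^+ 2.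
  apply: le_trans (trmx_mul_col_le _ _) _.
  by rewrite mulrC expr2 mulrA ler_wpM2r ?enorm_ge0 ?enorm_mulmx_specnorm.
rewrite quadform_lyap_expand eTe /lyap_gain -/M -/Q; nra.
Qed.

Lemma quadform_cols_lyap_step p (X D : 'M[R]_(m, p)) :
  \sum_l quadform W (col l (C *m X + B *m D)) - \sum_l quadform W (col l X)
  <= - (1 / 2) * enorm X ^+ 2 + lyap_gain C B W * enorm D ^+ 2.
Proof.
rewrite !sqr_enorm_cols -sumrB !mulr_sumr -big_split /=; apply: ler_sum => l _.
by rewrite !colE mulmxDl -!mulmxA -!colE quadform_lyap_step.
Qed.

End Step.
End LyapunovStep.

Section MeanProjector.
Variables (R : realType) (m : nat) (v : 'cV[R]_m).

(* [1%:M - mean_proj] and [C - mean_proj] are [Ibar_v v] and [Cbar C v] up to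
   conversion (when m is some [n i]). *)
Definition mean_proj : 'M[R]_m := m%:R^-1 *: (v *m ones_row R m).

Hypotheses (m_gt0 : (0 < m)%N) (sum_v : \sum_j v j 0 = m%:R).

Lemma mean_proj_idem : mean_proj *m mean_proj = mean_proj.
Proof.
have ones_v : ones_row R m *m v = m%:R%:M.
  by apply/matrixP => i j; rewrite !ord1 !mxE -sum_v; apply: eq_bigr => k _; rewrite mxE mul1r.
rewrite /mean_proj -scalemxAl -scalemxAr scalerA !mulmxA -[v *m _ *m v]mulmxA ones_v.
by rewrite mul_mx_scalar -scalemxAl scalerA -mulrA mulVf ?mulr1 // pnatr_eq0 -lt0n.
Qed.

Lemma mean_proj_commute (C : 'M[R]_m) :
  C *m v = v -> (forall j, \sum_k C k j = 1) ->
  (1%:M - mean_proj) *m C = (C - mean_proj) *m (1%:M - mean_proj).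
Proof.
move=> Cv sum_C.
have ones_C : ones_row R m *m C = ones_row R m.
  by apply/matrixP => i j; rewrite !mxE -(sum_C j); apply: eq_bigr => k _; rewrite mxE mul1r.
have CP : C *m mean_proj = mean_proj by rewrite /mean_proj -scalemxAr mulmxA Cv.
have PC : mean_proj *m C = mean_proj by rewrite /mean_proj -scalemxAl -mulmxA ones_C.
rewrite [LHS]mulmxBl mul1mx PC [RHS]mulmxBl !mulmxBr !mulmx1 CP mean_proj_idem.
by rewrite subrr subr0.
Qed.

End MeanProjector.

Section TensorIndexing.
Variable R : realType.

Lemma sum_mxtens m p (F : 'I_(m * p) -> R) :
  \sum_k F k = \sum_i \sum_j F (mxtens_index (i, j)).
Proof.
rewrite pair_big /= (reindex (@mxtens_index m p)) /=; first by apply: eq_bigr => -[].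
by exists (@mxtens_unindex m p) => k _; rewrite ?mxtens_indexK ?mxtens_unindexK.
Qed.

Variables (m p : nat) (e : 'cV[R]_(m * p)) (X : 'M[R]_(m, p)).
Hypothesis eX : forall j l, e (mxtens_index (j, l)) 0 = X j l.

Lemma sqr_enorm_tens : enorm e ^+ 2 = enorm X ^+ 2.
Proof.
rewrite sqr_enorm_col sqr_enorm sum_mxtens.
by apply: eq_bigr => j _; apply: eq_bigr => l _; rewrite eX.
Qed.

Lemma quadform_tensmx1 (W : 'M[R]_m) :
  quadform (tensmx W 1%:M) e = \sum_l quadform W (col l X).
Proof.
rewrite /quadform mxE sum_mxtens exchange_big /=; apply: eq_bigr => l _.
rewrite mxE; apply: eq_bigr => j' _.
rewrite eX !mxE sum_mxtens; congr (_ * _).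
apply: eq_bigr => j _; rewrite (bigD1 l) //= big1 ?addr0 => [|l' l'_neq_l].
  by rewrite !mxE eX !mxtens_indexK eqxx mulr1.
by rewrite !mxE !mxtens_indexK /= (negbTE l'_neq_l) !mulr0.
Qed.

End TensorIndexing.

Section TrackingError.
Variables (R : realType) (N : nat) (n : 'I_N -> nat).
Implicit Types (ps : forall i : 'I_N, 'I_(n i) -> 'I_(n i) -> R)
  (v : forall i, 'cV[R]_(n i)).

Definition psimx ps i : 'M[R]_(n i) := \matrix_(j, l) ps i j l.

Lemma psibarE ps i l : psibar ps i l 0 = (n i)%:R^-1 * \sum_j ps i j l.
Proof.
rewrite /psibar castmxE !mxE; congr (_ * _).
have -> : cast_ord (esym (mul1n (n i))) l = mxtens_index (ord0, l).
  by apply: val_inj; rewrite /= mul0n add0n.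
rewrite sum_mxtens; apply: eq_bigr => j _.
rewrite (bigD1 l) //= big1 ?addr0 => [|l' l'_neq_l].
  by rewrite !mxE !mxtens_indexK /= eqxx !mul1r.
by rewrite !mxE !mxtens_indexK /= eq_sym (negbTE l'_neq_l) mulr0 mul0r.
Qed.

Lemma epsiE v ps i j l :
  epsi v ps i (mxtens_index (j, l)) 0 = ((1%:M - mean_proj (v i)) *m psimx ps i) j l.
Proof.
transitivity (ps i j l - v i j 0 * psibar ps i l 0).
  by rewrite !mxE mxtens_indexK; congr (_ - v i j _ * psibar ps i l _); apply: val_inj.
rewrite psibarE mulmxBl mul1mx !mxE; congr (_ - _).
rewrite mulrA mulr_sumr; apply: eq_bigr => k _.
by rewrite !mxE big_ord1 !mxE mulr1 [_^-1 * _]mulrC.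
Qed.

Lemma VpsiE v Wc ps : Vpsi v Wc ps =
  \sum_i \sum_l quadform (Wc i) (col l ((1%:M - mean_proj (v i)) *m psimx ps i)).
Proof. by apply: eq_bigr => i _; apply: quadform_tensmx1 => j l; rewrite epsiE. Qed.

Lemma epsi_sqE v ps :
  epsi_sq v ps = \sum_i enorm ((1%:M - mean_proj (v i)) *m psimx ps i) ^+ 2.
Proof. by apply: eq_bigr => i _; apply: sqr_enorm_tens => j l; rewrite epsiE. Qed.

Lemma Vpsi_step (Cw : forall i, 'M[R]_(n i)) v Wc ps ps' (D : forall i, 'M[R]_(n i)) :
  (forall i, (0 < n i)%N) -> (forall i, right_perron (Cw i) (v i)) ->
  (forall i j, \sum_k Cw i k j = 1) -> (forall i, lyap_sol (Cbar (Cw i) (v i)) (Wc i)) ->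
  (forall i, psimx ps' i = Cw i *m psimx ps i + D i) ->
  Vpsi v Wc ps' - Vpsi v Wc ps <= - (1 / 2) * epsi_sq v ps
    + \sum_i lyap_gain (Cbar (Cw i) (v i)) (Ibar_v (v i)) (Wc i) * enorm (D i) ^+ 2.
Proof.
move=> n_gt0 perron sum_C lyap psi_step.
rewrite !VpsiE epsi_sqE -sumrB mulr_sumr -big_split /=; apply: ler_sum => i _.
have [Cv sum_v] := perron i; have [W_sym _ lyapC] := lyap i.
rewrite psi_step mulmxDr mulmxA (mean_proj_commute (n_gt0 i) sum_v Cv (sum_C i)) -mulmxA.
exact: quadform_cols_lyap_step.
Qed.

End TrackingError.

Section Agents.
Variables (R : realType) (N : nat) (n : 'I_N -> nat).

Lemma sum_agent (G : agent n -> R) : \sum_a G a = \sum_i \sum_(j < n i) G (ag j).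
Proof.
rewrite (@sig_big_dep _ _ _ _ (fun i => 'I_(n i)) xpredT (fun _ _ => true)
  (fun i (j : 'I_(n i)) => G (ag j))) /=.
by apply: eq_bigr => -[].
Qed.

Lemma sum_agv (G : agent n -> R) : \sum_(r < nsum n) G (agv r) = \sum_a G a.
Proof.
rewrite [RHS](reindex (@agv _ _)) //.
by exists (@aidx _ _) => a _; [exact: enum_valK | exact: enum_rankK].
Qed.

Lemma sqr_enorm_agvec (g : agent n -> R) : enorm (agvec g) ^+ 2 = \sum_a g a ^+ 2.
Proof. by rewrite sqr_enorm big_ord1 -sum_agv; apply: eq_bigr => r _; rewrite mxE. Qed.

Lemma agvecB (g h : agent n -> R) : agvec g - agvec h = agvec (fun a => g a - h a).
Proof. by apply/matrixP => i r; rewrite !mxE. Qed.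

Lemma ag_inj i : injective (@ag N n i).
Proof. by move=> j j' ajj'; exact: existT_inj2 ajj'. Qed.

Lemma sum_coal_le_sqr_enorm i (g : 'rV[R]_(nsum n)) :
  \sum_(l < n i) g 0 (aidx (ag l)) ^+ 2 <= enorm g ^+ 2.
Proof.
have aidx_ag_inj : {in predT &, injective (fun l : 'I_(n i) => aidx (ag l))}.
  by move=> l l' _ _ /enum_rank_inj /ag_inj.
rewrite sqr_enorm big_ord1 -(big_imset (fun r => g 0 r ^+ 2) aidx_ag_inj) /=.
by rewrite big_mkcond /=; apply: ler_sum => r _; case: ifP => // _; rewrite sqr_ge0.
Qed.

Lemma partialD_coal_lipschitz (f : 'rV[R]_(nsum n) -> R) (L : R) z z' i :
  lipschitz_gradient f L ->
  \sum_(l < n i) (partialD f (aidx (ag l)) z' - partialD f (aidx (ag l)) z) ^+ 2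
  <= L ^+ 2 * enorm (z' - z) ^+ 2.
Proof.
move=> Lf; have := sum_coal_le_sqr_enorm i (gradient f z' - gradient f z).
under eq_bigr do rewrite !mxE.
move/le_trans; apply; rewrite -exprMn ler_pXn2r ?nnegrE ?enorm_ge0 ?Lf //.
exact: le_trans (enorm_ge0 _) (Lf z' z).
Qed.

Lemma ex_sqE u (x : agent n -> R) :
  ex_sq u x = \sum_p (x p - xbar u x (tag p)) ^+ 2.
Proof.
rewrite sum_agent; apply: eq_bigr => i _.
by rewrite sqr_enorm_col; apply: eq_bigr => j _; rewrite !mxE mulr1.
Qed.

Lemma exi_sqE u (x : agent n -> R) X :
  exi_sq u x X = \sum_a \sum_p (X a p - xbar u x (tag p)) ^+ 2.
Proof. by apply: eq_bigr => a _; rewrite agvecB sqr_enorm_agvec. Qed.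

End Agents.

Section ConsensusFilter.
Variables (R : realType) (N : nat) (n : 'I_N -> nat) (E : rel (agent n)).
Local Notation adj := (adj R E).
Local Notation deg := (deg R E).

Definition pairvec (F : agent n -> agent n -> R) : 'cV[R]_(nsum n * nsum n) :=
  \col_K F (agv (mxtens_unindex K).1) (agv (mxtens_unindex K).2).

Lemma pairvecE F r s : pairvec F (mxtens_index (r, s)) 0 = F (agv r) (agv s).
Proof. by rewrite mxE mxtens_indexK. Qed.

Lemma sqr_enorm_pairvec F : enorm (pairvec F) ^+ 2 = \sum_a \sum_p F a p ^+ 2.
Proof.
rewrite sqr_enorm_col sum_mxtens -sum_agv; apply: eq_bigr => r _.
by rewrite -sum_agv; apply: eq_bigr => s _; rewrite pairvecE.
Qed.

Lemma lapl_mulE (y : agent n -> R) r :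
  \sum_r' lapl R E r r' * y (agv r') = \sum_b adj (agv r) b * (y (agv r) - y b).
Proof.
set a := agv r.
have adj_aa : adj a a = 0 by rewrite /adj eqxx andbF.
rewrite -sum_agv (bigD1 r) //= [X in _ = X](bigD1 r) //= -/a adj_aa subrr mulr0 add0r.
rewrite mxE eqxx /deg -sum_agv (bigD1 r) //= -/a adj_aa add0r mulr_suml -big_split /=.
by apply: eq_bigr => r' /negbTE r'_neq_r; rewrite mxE eq_sym r'_neq_r; ring.
Qed.

Lemma Hmx_mulE (V : 'cV[R]_(nsum n * nsum n)) r s :
  (Hmx R E *m V) (mxtens_index (r, s)) 0 = (deg (agv r) + adj (agv r) (agv s))^-1 *
    (\sum_r' lapl R E r r' * V (mxtens_index (r', s)) 0
     + adj (agv r) (agv s) * V (mxtens_index (r, s)) 0).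
Proof.
rewrite /Hmx -mulmxA mulmxDl /Gam /Adg !mul_diag_mx !mxE !mxtens_indexK /=.
congr (_ * (_ + _)); rewrite sum_mxtens; apply: eq_bigr => r' _.
rewrite (bigD1 s) //= big1 ?addr0 => [|s' s'_neq_s].
  by rewrite !mxE !mxtens_indexK /= eqxx mulr1.
by rewrite !mxE !mxtens_indexK /= [s == _]eq_sym (negbTE s'_neq_s) mulr0 mul0r.
Qed.

Variables (x : agent n -> R) (X X' : agent n -> agent n -> R).
Hypothesis X_step : forall a p, X' a p = X a p - (deg a + adj a p)^-1 *
  (\sum_b adj a b * (X a p - X b p) + adj a p * (X a p - x p)).

Lemma filter_increment :
  pairvec (fun a p => X' a p - X a p) = - (Hmx R E *m pairvec (fun a p => X a p - x p)).
Proof.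
apply/matrixP => K z; rewrite (ord1 z) {z}; case: (mxtens_indexP K) => r s.
set y := fun b => X b (agv s) - x (agv s).
rewrite [RHS]mxE Hmx_mulE !pairvecE X_step.
rewrite (eq_bigr (fun r' => lapl R E r r' * y (agv r'))) => [|r' _]; last by rewrite pairvecE.
rewrite lapl_mulE /y addrAC subrr add0r; congr (- (_ * (_ + _))).
by apply: eq_bigr => b _; rewrite opprB addrA subrK.
Qed.

Lemma filter_increment_bound u :
  \sum_a enorm (agvec (X' a) - agvec (X a)) ^+ 2
  <= 2 * specnorm (Hmx R E) ^+ 2 * (exi_sq u x X + (nsum n)%:R * ex_sq u x).
Proof.
have -> : \sum_a enorm (agvec (X' a) - agvec (X a)) ^+ 2
    = enorm (Hmx R E *m pairvec (fun a p => X a p - x p)) ^+ 2.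
  rewrite -[Hmx _ _ *m _]opprK -filter_increment -scaleN1r enormZ normrN normr1 mul1r.
  by rewrite sqr_enorm_pairvec; apply: eq_bigr => a _; rewrite agvecB sqr_enorm_agvec.
apply: le_trans (sqr_enorm_mulmx_specnorm _ _) _.
rewrite [2 * _]mulrC -[leRHS]mulrA ler_wpM2l ?exprn_ge0 ?specnorm_ge0 //.
have -> : (nsum n)%:R * ex_sq u x = \sum_(a : agent n) ex_sq u x.
  by rewrite sumr_const mulr_natl.
rewrite sqr_enorm_pairvec exi_sqE -big_split mulr_sumr /=; apply: ler_sum => a _.
rewrite ex_sqE -big_split mulr_sumr /=; apply: ler_sum => p _.
have := sqr_ge0 (X a p - xbar u x (tag p) + (x p - xbar u x (tag p))); nra.
Qed.

End ConsensusFilter.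

Theorem lemma1 (R : realType) (N : nat) (n : 'I_N -> nat)
  (E : rel (agent n))
  (f : agent n -> 'rV[R]_(nsum n) -> R) (l : agent n -> R)
  (Rw Cw : forall i, 'M[R]_(n i)) (alpha : R)
  (u v : forall i, 'cV[R]_(n i)) (Wc : forall i, 'M[R]_(n i))
  (x : nat -> agent n -> R) (xi : nat -> agent n -> agent n -> R)
  (psi : nat -> forall i : 'I_N, 'I_(n i) -> 'I_(n i) -> R) :
  (forall i, (0 < n i)%N) ->
  (* (A1) *)
  strongly_connected E -> (forall i, strongly_connected (coal_rel E i)) ->
  (* (A2) *)
  (forall a, [/\ convex_fun (f a), C2_fun (f a) & lipschitz_gradient (f a) (l a)]) ->
  (* weights, step size *)
  (forall i, row_weights E (Rw i)) -> (forall i, col_weights E (Cw i)) ->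
  0 < alpha ->
  (* auxiliary quantities *)
  (forall i, left_perron (Rw i) (u i)) -> (forall i, right_perron (Cw i) (v i)) ->
  (forall i, lyap_sol (Cbar (Cw i) (v i)) (Wc i)) ->
  (* trajectory of the algorithm *)
  trajectory E f Rw Cw alpha x xi psi ->
  forall k : nat,
    Vpsi v Wc (psi k.+1) - Vpsi v Wc (psi k)
    <= - (1 / 2) * epsi_sq v (psi k)
       + beta_psixi E Cw v Wc l * exi_sq u (x k) (xi k)
       + beta_psix E Cw v Wc l * ex_sq u (x k).
Proof.
move=> n_gt0 _ _ A2 _ col_w _ _ perron lyap [_ _ xi_step psi_step] k.
pose D i : 'M[R]_(n i) := \matrix_(j, r)
  (partialD (f (ag j)) (aidx (ag r)) (agvec (xi k.+1 (ag j)))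
   - partialD (f (ag j)) (aidx (ag r)) (agvec (xi k (ag j)))).
have psi_mx i : psimx (psi k.+1) i = Cw i *m psimx (psi k) i + D i.
  apply/matrixP => j r; rewrite !mxE psi_step addrA.
  by congr (_ + _ - _); apply: eq_bigr => m _; rewrite mxE.
have sum_C i j : \sum_m Cw i m j = 1 by have [_ _] := col_w i.
have V_step := Vpsi_step n_gt0 perron sum_C lyap psi_mx.
rewrite /beta_psix /beta_psixi; set B := \big[Num.max/0]_a _.
have grad_step : \sum_i lyap_gain (Cbar (Cw i) (v i)) (Ibar_v (v i)) (Wc i) * enorm (D i) ^+ 2
    <= B * \sum_a enorm (agvec (xi k.+1 a) - agvec (xi k a)) ^+ 2.
  rewrite sum_agent mulr_sumr; apply: ler_sum => i _.
  rewrite sqr_enorm !mulr_sumr; apply: ler_sum => j _ /=.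
  have [_ _ Lf] := A2 (ag j).
  under eq_bigr do rewrite mxE.
  apply: le_trans (ler_wpM2l (lyap_gain_ge0 _ _ _) (partialD_coal_lipschitz _ _ _ Lf)) _.
  rewrite mulrA ler_wpM2r ?exprn_ge0 ?enorm_ge0 //.
  exact: (le_bigmax _ _ (ag j)).
have B_ge0 : 0 <= B by exact: bigmax_ge_id.
have xi_bound := ler_wpM2l B_ge0 (filter_increment_bound (xi_step k) u).
nra.
Qed.
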